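(* Under Assumptions (A1) and (A2) of the context, let $B$ be the solution on $[0,T]$ of the constrained ODE and $\lambda^\ast,\pi^\ast$ as in the context. Then for all $t\in[0,T]$, $$\tfrac12\tfrac b{1-b}\eta^2-\tfrac12\tfrac b{1-b}\big(\lambda^\ast(B(T-t))+\sigma\rho B(T-t)\big)^2-\tfrac12b^2\rho^2\pi^\ast(t)^2+b\tfrac{\rho\kappa}\sigma\pi^\ast(t)+\tfrac b{1-b}\tfrac\rho\sigma\big[(\lambda^\ast)'(B(T-t))+\sigma\rho\big]B'(T-t)<\tfrac12\tfrac{\kappa^2}{\sigma^2}.$$
   Context: Parameters: $T>0$; $\eta,\kappa,\sigma>0$; $\rho\in(-1,1)$; $b<1$, $b\ne0$; $K=[\alpha,\beta]$, $-\infty\le\alpha<\beta\le\infty$; $\delta_K(x)=-\alpha x\mathbf 1_{\{x>0\}}-\beta x\mathbf 1_{\{x<0\}}$. $B_-=\frac{(1-b)\alpha-\eta}\sigma$, $B_+=\frac{(1-b)\beta-\eta}\sigma$; $r_0^-=\tfrac12 b\alpha((1-b)\alpha-2\eta)$, $r_1^-=b\sigma\rho\alpha-\kappa$, $r_2^-=\sigma^2$; $r_0=-\frac b{2(1-b)}\eta^2$, $r_1=\frac b{1-b}\eta\sigma\rho-\kappa$, $r_2=\sigma^2(1+\frac b{1-b}\rho^2)$; $r_0^+=\tfrac12 b\beta((1-b)\beta-2\eta)$, $r_1^+=b\sigma\rho\beta-\kappa$, $r_2^+=\sigma^2$. For a triple $(c_0,c_1,c_2)$: $c_3=\sqrt{c_1^2+2c_0c_2}$,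 $t_+(y_0)=\frac1{c_3}\ln\frac{c_1+c_2y_0+c_3}{c_1+c_2y_0-c_3}$ if $c_1+c_2y_0-c_3>0$, else $\infty$. (A1): (i) $\max\{\frac b{1-b}\eta(\frac{\kappa\rho}\sigma+\frac\eta2),\ b\alpha(\eta-\frac\alpha2+\frac{\kappa\rho}\sigma+\frac12\alpha b(1-\rho^2)),\ b\beta(\eta-\frac\beta2+\frac{\kappa\rho}\sigma+\frac12\beta b(1-\rho^2))\}<\frac{\kappa^2}{2\sigma^2}$; (ii) for each triple $(r_0^-,r_1^-,r_2^-),(r_0,r_1,r_2),(r_0^+,r_1^+,r_2^+)$ and each $y_0\in\{\frac{B_-}\rho\mathbf 1_{\{\rho\ne0\}},\frac{B_+}\rho\mathbf 1_{\{\rho\ne0\}},0\}$, $t_+(y_0)>T$. (A2): $\max\{\frac{b\rho}\kappa\alpha,\frac{b\rho}\kappa\beta\}\le\frac\kappa{\sigma^2}$. Constrained ODE: $B'(\tau)=-\kappa B+\frac12\sigma^2B^2+\frac12\frac b{1-b}\inf_{\lambda\in\mathbb R}(2(1-b)\delta_K(\lambda)+(\eta+\lambda+\sigma\rho B)^2)$, $B(0)=0$ (unique solution on $[0,T]$ under (A1)). $\lambda^\ast(B)=[(1-b)\alpha-(\eta+\sigma\rho B)]\mathbf 1_{\{\rho B<B_-\}}+[(1-b)\beta-(\eta+\sigma\rho B)]\mathbf 1_{\{\rho B>B_+\}}$, a piecewise affine function whose derivative $(\lambda^\ast)'(B)$ equals $-\sigma\rho$ when $\rho B<B_-$ or $\rho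 B>B_+$ and $0$ when $B_-<\rho B<B_+$ (at the kinks either one-sided value may be used). $\pi^\ast(t)=\frac1{1-b}(\eta+\lambda^\ast(B(T-t))+\sigma\rho B(T-t))$. *)

From Stdlib Require Import Reals Lra.
From Coquelicot Require Import Coquelicot.
Open Scope R_scope.

(* The constraint set K = [alpha, beta], -oo <= alpha < beta <= +oo.
   An endpoint is encoded as [option R]: [None] for alpha = -oo (resp. beta = +oo). *)
Definition K_wf (alpha beta : option R) : Prop :=
  match alpha, beta with
  | Some a, Some c => a < c
  | _, _ => True
  end.

(* Effective domain of delta_K (delta_K(x) = +oo exactly when the
   corresponding endpoint is infinite). *)
Definition deltaK_dom (alpha beta : option R) (x : R) : Prop :=
  (0 < x -> alpha <> None) /\ (x < 0 -> beta <> None).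

Definition deltaK (alpha beta : option R) (x : R) : R :=
  (if Rlt_dec 0 x then match alpha with Some a => - a * x | None => 0 end else 0)
  + (if Rlt_dec x 0 then match beta with Some c => - c * x | None => 0 end else 0).

Definition Bbound (eta sigma b k : R) : R := ((1 - b) * k - eta) / sigma.

Definition ode_rhs (eta kappa sigma rho b : R) (alpha beta : option R) (x : R) : R :=
  - kappa * x + / 2 * sigma ^ 2 * x ^ 2
  + / 2 * (b / (1 - b)) *
    real (Glb_Rbar (fun y => exists l, deltaK_dom alpha beta l /\
            y = 2 * (1 - b) * deltaK alpha beta l + (eta + l + sigma * rho * x) ^ 2)).

Definition below_Bm (eta sigma rho b : R) (alpha : option R) (x : R) : Prop :=
  match alpha with Some a => rho * x < Bbound eta sigma b a | None => False end.
Definition above_Bp (eta sigma rho b : R) (beta : option R) (x : R) : Prop :=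
  match beta with Some c => Bbound eta sigma b c < rho * x | None => False end.

Definition lamstar (eta sigma rho b : R) (alpha beta : option R) (x : R) : R :=
  (match alpha with
   | Some a => if Rlt_dec (rho * x) (Bbound eta sigma b a)
               then (1 - b) * a - (eta + sigma * rho * x) else 0
   | None => 0 end)
  + (match beta with
   | Some c => if Rlt_dec (Bbound eta sigma b c) (rho * x)
               then (1 - b) * c - (eta + sigma * rho * x) else 0
   | None => 0 end).

(* d is an admissible value of lambda-star'(x): -sigma rho on the outer pieces,
   0 on the middle piece, and either one-sided value at a kink. *)
Definition lamstar_deriv_ok (eta sigma rho b : R) (alpha beta : option R)
  (x d : R) : Prop :=
  (below_Bm eta sigma rho b alpha x -> d = - sigma * rho) /\
  (above_Bp eta sigma rho b beta x -> d = - sigma * rho) /\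
  (~ below_Bm eta sigma rho b alpha x -> ~ above_Bp eta sigma rho b beta x ->
     (match alpha with Some a => rho * x <> Bbound eta sigma b a | None => True end) ->
     (match beta with Some c => rho * x <> Bbound eta sigma b c | None => True end) ->
     d = 0) /\
  (d = 0 \/ d = - sigma * rho).

Definition pistar (eta sigma rho b : R) (alpha beta : option R) (B : R -> R) (T t : R) : R :=
  / (1 - b) * (eta + lamstar eta sigma rho b alpha beta (B (T - t)) + sigma * rho * B (T - t)).

Definition tplus (c0 c1 c2 y0 : R) : Rbar :=
  let c3 := sqrt (c1 ^ 2 + 2 * c0 * c2) in
  if Rlt_dec 0 (c1 + c2 * y0 - c3)
  then Finite (/ c3 * ln ((c1 + c2 * y0 + c3) / (c1 + c2 * y0 - c3)))
  else p_infty.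

Definition y0_of (rho Bv : R) : R :=
  if Req_EM_T rho 0 then 0 else Bv / rho.

Definition fin_ends (alpha beta : option R) (k : R) : Prop :=
  alpha = Some k \/ beta = Some k.

(* Assumption (A1); terms involving an infinite endpoint are omitted. *)
Definition Assumption_A1 (T eta kappa sigma rho b : R) (alpha beta : option R) : Prop :=
  (b / (1 - b) * eta * (kappa * rho / sigma + eta / 2) < kappa ^ 2 / (2 * sigma ^ 2)
   /\ forall k, fin_ends alpha beta k ->
      b * k * (eta - k / 2 + kappa * rho / sigma + / 2 * k * b * (1 - rho ^ 2))
        < kappa ^ 2 / (2 * sigma ^ 2))
  /\
  (forall c0 c1 c2 y0,
     ((c0 = - b / (2 * (1 - b)) * eta ^ 2 /\ c1 = b / (1 - b) * eta * sigma * rho - kappa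
        /\ c2 = sigma ^ 2 * (1 + b / (1 - b) * rho ^ 2))
      \/ (exists k, fin_ends alpha beta k /\
            c0 = / 2 * b * k * ((1 - b) * k - 2 * eta) /\ c1 = b * sigma * rho * k - kappa
            /\ c2 = sigma ^ 2)) ->
     (y0 = 0 \/ exists k, fin_ends alpha beta k /\ y0 = y0_of rho (Bbound eta sigma b k)) ->
     Rbar_lt (Finite T) (tplus c0 c1 c2 y0)).

(* Assumption (A2); terms involving an infinite endpoint are omitted. *)
Definition Assumption_A2 (kappa sigma rho b : R) (alpha beta : option R) : Prop :=
  forall k, fin_ends alpha beta k -> b * rho / kappa * k <= kappa / sigma ^ 2.

(* B solves the constrained ODE on [0,T], with derivative dB
   (one-sided at the endpoints: derivative within [0,T]). *)
Definition solves_ode (T eta kappa sigma rho b : R) (alpha beta : option R)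
  (B dB : R -> R) : Prop :=
  B 0 = 0 /\
  forall tau, 0 <= tau <= T ->
    filterdiff B (within (fun s => 0 <= s <= T) (locally tau)) (fun h => scal h (dB tau))
    /\ dB tau = ode_rhs eta kappa sigma rho b alpha beta (B tau).

(* On each piece of lambda^*, the left-hand side is a constant bounded by (A1)(i).
   Where a finite endpoint k is active (eta + lambda^* + sigma rho B = (1-b) k, and
   the derivative of lambda^* is -sigma rho) the B' term vanishes and the expression
   collapses to b k (eta - k/2 + kappa rho/sigma + k b (1 - rho^2)/2).  On the middle
   piece lambda^* = 0 with derivative 0, the infimum in the ODE is attained at
   lambda = 0, and substituting B' leaves b/(1-b) eta (kappa rho/sigma + eta/2).  At a
   kink each admissible one-sided derivative falls into one of these two cases.
   The bound is pointwise in t. *)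
From Stdlib Require Import Reals Lra Classical.
From Coquelicot Require Import Coquelicot.
Open Scope R_scope.
Set Bullet Behavior "Strict Subproofs".

Definition lhs_2p6 (eta kappa sigma rho b L x d dBv : R) : R :=
  / 2 * (b / (1 - b)) * eta ^ 2
  - / 2 * (b / (1 - b)) * (L + sigma * rho * x) ^ 2
  - / 2 * b ^ 2 * rho ^ 2 * (/ (1 - b) * (eta + L + sigma * rho * x)) ^ 2
  + b * (rho * kappa / sigma) * (/ (1 - b) * (eta + L + sigma * rho * x))
  + b / (1 - b) * (rho / sigma) * (d + sigma * rho) * dBv.

Lemma lhs_2p6_outer eta kappa sigma rho b k L x d dBv :
  sigma <> 0 -> 1 - b <> 0 -> d = - sigma * rho ->
  eta + L + sigma * rho * x = (1 - b) * k ->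
  lhs_2p6 eta kappa sigma rho b L x d dBv =
  b * k * (eta - k / 2 + kappa * rho / sigma + / 2 * k * b * (1 - rho ^ 2)).
Proof.
  intros Hs Hb -> HL.
  replace L with ((1 - b) * k - eta - sigma * rho * x) by lra.
  unfold lhs_2p6. field. auto.
Qed.

Lemma lhs_2p6_middle eta kappa sigma rho b x dBv :
  sigma <> 0 -> 1 - b <> 0 ->
  dBv = - kappa * x + / 2 * sigma ^ 2 * x ^ 2
        + / 2 * (b / (1 - b)) * (eta + sigma * rho * x) ^ 2 ->
  lhs_2p6 eta kappa sigma rho b 0 x 0 dBv =
  b / (1 - b) * eta * (kappa * rho / sigma + eta / 2).
Proof.
  intros Hs Hb ->. unfold lhs_2p6. field. auto.
Qed.

Lemma Glb_penalized_square_interior eta b s (alpha beta : option R) :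
  0 < 1 - b ->
  (forall a, alpha = Some a -> (1 - b) * a <= eta + s) ->
  (forall c, beta = Some c -> eta + s <= (1 - b) * c) ->
  real (Glb_Rbar (fun y => exists l, deltaK_dom alpha beta l /\
          y = 2 * (1 - b) * deltaK alpha beta l + (eta + l + s) ^ 2)) = (eta + s) ^ 2.
Proof.
  intros Hb Ha Hc.
  rewrite (is_glb_Rbar_unique _ (Finite ((eta + s) ^ 2))); [reflexivity|].
  split.
  - intros y [l [[Dpos Dneg] ->]]. simpl. unfold deltaK.
    destruct (Rlt_dec 0 l) as [Hl|Hl]; destruct (Rlt_dec l 0) as [Hl'|Hl'].
    + lra.
    + destruct alpha as [a|]; [|exfalso; now apply Dpos].
      specialize (Ha a eq_refl).
      assert (0 <= l * (eta + s - (1 - b) * a)) by (apply Rmult_le_pos; lra).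
      nra.
    + destruct beta as [c|]; [|exfalso; now apply Dneg].
      specialize (Hc c eq_refl).
      assert (0 <= - l * ((1 - b) * c - (eta + s))) by (apply Rmult_le_pos; lra).
      nra.
    + replace l with 0 by lra. lra.
  - intros m Hm. apply Hm. exists 0. split.
    + split; intros; lra.
    + unfold deltaK. destruct (Rlt_dec 0 0); [lra|]. ring.
Qed.

Section LambdaStar.

Variables (eta sigma rho b : R) (alpha beta : option R).
Hypotheses (sigma_pos : 0 < sigma) (one_minus_b_pos : 0 < 1 - b).

Lemma sigma_Bbound k : sigma * Bbound eta sigma b k = (1 - b) * k - eta.
Proof. unfold Bbound. field. lra. Qed.

Lemma Bbound_lt a c : a < c -> Bbound eta sigma b a < Bbound eta sigma b c.
Proof.
  intros Hac. pose proof (sigma_Bbound a). pose proof (sigma_Bbound c). nra.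
Qed.

Definition on_outer_piece (x k : R) : Prop :=
  (alpha = Some k /\ rho * x <= Bbound eta sigma b k)
  \/ (beta = Some k /\ Bbound eta sigma b k <= rho * x).

Lemma on_outer_piece_fin_ends x k : on_outer_piece x k -> fin_ends alpha beta k.
Proof. intros [[-> _]|[-> _]]; [left|right]; reflexivity. Qed.

Lemma lamstar_on_outer_piece x k :
  K_wf alpha beta -> on_outer_piece x k ->
  eta + lamstar eta sigma rho b alpha beta x + sigma * rho * x = (1 - b) * k.
Proof.
  assert (Hkink : rho * x = Bbound eta sigma b k -> eta + sigma * rho * x = (1 - b) * k).
  { intros E. rewrite Rmult_assoc, E, sigma_Bbound. ring. }
  intros HK [[-> Hle]|[-> Hle]]; unfold lamstar.
  - assert (Hbeta : forall c, beta = Some c -> rho * x < Bbound eta sigma b c).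
    { intros c ->. apply (Rle_lt_trans _ _ _ Hle), Bbound_lt. exact HK. }
    destruct beta as [c|];
      [destruct (Rlt_dec (Bbound eta sigma b c) (rho * x));
       [specialize (Hbeta c eq_refl); lra|] |];
      destruct (Rlt_dec (rho * x) (Bbound eta sigma b k)); try ring;
      rewrite <- Hkink by lra; ring.
  - assert (Halpha : forall a, alpha = Some a -> Bbound eta sigma b a < rho * x).
    { intros a ->. apply (Rlt_le_trans _ _ _ (Bbound_lt _ _ HK) Hle). }
    destruct alpha as [a|];
      [destruct (Rlt_dec (rho * x) (Bbound eta sigma b a));
       [specialize (Halpha a eq_refl); lra|] |];
      destruct (Rlt_dec (Bbound eta sigma b k) (rho * x)); try ring;
      rewrite <- Hkink by lra; ring.
Qed.

Lemma lamstar_middle x :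
  ~ below_Bm eta sigma rho b alpha x -> ~ above_Bp eta sigma rho b beta x ->
  lamstar eta sigma rho b alpha beta x = 0.
Proof.
  intros Nbelow Nabove. unfold lamstar.
  destruct alpha as [a|]; destruct beta as [c|]; simpl in Nbelow, Nabove;
    repeat match goal with |- context [Rlt_dec ?u ?v] =>
      destruct (Rlt_dec u v); [tauto|] end;
    ring.
Qed.

Lemma ode_rhs_middle kappa x :
  ~ below_Bm eta sigma rho b alpha x -> ~ above_Bp eta sigma rho b beta x ->
  ode_rhs eta kappa sigma rho b alpha beta x =
  - kappa * x + / 2 * sigma ^ 2 * x ^ 2
  + / 2 * (b / (1 - b)) * (eta + sigma * rho * x) ^ 2.
Proof.
  intros Nbelow Nabove. unfold ode_rhs.
  rewrite Glb_penalized_square_interior; [reflexivity|exact one_minus_b_pos|..].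
  - intros a ->. apply Rnot_lt_le in Nbelow. pose proof (sigma_Bbound a). nra.
  - intros c ->. apply Rnot_lt_le in Nabove. pose proof (sigma_Bbound c). nra.
Qed.

Lemma lamstar_deriv_cases x d :
  lamstar_deriv_ok eta sigma rho b alpha beta x d ->
  (d = 0 /\ ~ below_Bm eta sigma rho b alpha x /\ ~ above_Bp eta sigma rho b beta x)
  \/ (d = - sigma * rho /\ exists k, on_outer_piece x k).
Proof.
  intros [Dbelow [Dabove [Dmiddle Dvalues]]].
  destruct (classic (below_Bm eta sigma rho b alpha x)) as [Hbelow|Nbelow].
  { right. split; [auto|].
    destruct alpha as [a|] eqn:Ea; [|contradiction]. exists a. left. simpl in Hbelow. split; [exact Ea|lra]. }
  destruct (classic (above_Bp eta sigma rho b beta x)) as [Habove|Nabove].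
  { right. split; [auto|].
    destruct beta as [c|] eqn:Ec; [|contradiction]. exists c. right. simpl in Habove. split; [exact Ec|lra]. }
  destruct Dvalues as [Hd|Hd]; [left; auto|].
  destruct (classic (exists k, on_outer_piece x k)) as [Hk|Nk]; [right; auto|].
  left. split; [|auto]. apply Dmiddle; auto.
  - destruct alpha as [a|] eqn:Ea; [|exact I]. intros E. apply Nk. exists a. left. split; [exact Ea|lra].
  - destruct beta as [c|] eqn:Ec; [|exact I]. intros E. apply Nk. exists c. right. split; [exact Ec|lra].
Qed.

End LambdaStar.

Theorem lemma2p6 (T eta kappa sigma rho b : R) (alpha beta : option R)
  (B dB : R -> R) :
  0 < T -> 0 < eta -> 0 < kappa -> 0 < sigma -> -1 < rho < 1 -> b < 1 -> b <> 0 ->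
  K_wf alpha beta ->
  Assumption_A1 T eta kappa sigma rho b alpha beta ->
  Assumption_A2 kappa sigma rho b alpha beta ->
  solves_ode T eta kappa sigma rho b alpha beta B dB ->
  forall t, 0 <= t <= T ->
  forall d, lamstar_deriv_ok eta sigma rho b alpha beta (B (T - t)) d ->
  / 2 * (b / (1 - b)) * eta ^ 2
  - / 2 * (b / (1 - b)) * (lamstar eta sigma rho b alpha beta (B (T - t)) + sigma * rho * B (T - t)) ^ 2
  - / 2 * b ^ 2 * rho ^ 2 * (pistar eta sigma rho b alpha beta B T t) ^ 2
  + b * (rho * kappa / sigma) * pistar eta sigma rho b alpha beta B T t
  + b / (1 - b) * (rho / sigma) * (d + sigma * rho) * dB (T - t)
  < / 2 * (kappa ^ 2 / sigma ^ 2).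
Proof.
  intros _ _ _ Hsigma _ Hb _ HK [[A1_middle A1_ends] _] _ [_ Hode] t Ht d Hd.
  assert (Hb1 : 0 < 1 - b) by lra.
  destruct (Hode (T - t)) as [_ HdB]; [lra|].
  unfold pistar. set (x := B (T - t)) in *.
  change (lhs_2p6 eta kappa sigma rho b (lamstar eta sigma rho b alpha beta x) x d (dB (T - t))
          < / 2 * (kappa ^ 2 / sigma ^ 2)).
  replace (/ 2 * (kappa ^ 2 / sigma ^ 2)) with (kappa ^ 2 / (2 * sigma ^ 2)) by (field; lra).
  destruct (lamstar_deriv_cases _ _ _ _ _ _ _ _ Hd)
    as [[-> [Nbelow Nabove]] | [Hd' [k Hk]]].
  - rewrite (lamstar_middle _ _ _ _ _ _ _ Nbelow Nabove), lhs_2p6_middle; try lra.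
    rewrite HdB. apply ode_rhs_middle; assumption.
  - rewrite (lhs_2p6_outer _ _ _ _ _ k); try lra.
    + apply A1_ends, (on_outer_piece_fin_ends _ _ _ _ _ _ _ _ Hk).
    + apply lamstar_on_outer_piece; assumption.
Qed.
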